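(* Let $n\ge 2$. Every subgroup $H$ of $B_n(D)$ with $P_n(D)\subsetneq H\subset B_n(D)$ is partially bi-orderable. In particular, $B_n(D)$ is partially bi-orderable.
   Context: $B_n(D)$ is the Artin braid group on $n$ strands, with generators $\sigma_1,\dots,\sigma_{n-1}$ and relations $\sigma_i\sigma_j=\sigma_j\sigma_i$ for $|i-j|\ge 2$ and $\sigma_i\sigma_{i+1}\sigma_i=\sigma_{i+1}\sigma_i\sigma_{i+1}$. The permutation homomorphism $\pi: B_n(D)\to S_n$ is given by $\pi(\sigma_i)=(i,i+1)$, and $P_n(D)=\ker\pi$. A group $G$ is partially bi-orderable if there is a subsemigroup $Q\subset G$ with $Q\cap Q^{-1}=\emptyset$ and $gQg^{-1}\subset Q$ for all $g\in G$. *)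

(* The Artin braid group B_n(D) is presented by generators
   sigma_1..sigma_{n-1} and the braid relations; we model its elements as
   words in the letters sigma_i^{+-1}, modulo the congruence [beq n] generated
   by free cancellation and the braid relations (this is exactly the group
   given by the presentation). *)
From mathcomp Require Import all_boot all_order all_fingroup.
From mathcomp Require Import zify.
Set Implicit Arguments. Unset Strict Implicit. Unset Printing Implicit Defensive.

(* a letter (i, true) is sigma_{i+1}, (i, false) is sigma_{i+1}^{-1} *)
Definition letter (n : nat) := ('I_n.-1 * bool)%type.
Definition bword (n : nat) := seq (letter n).

Definition winv n (w : bword n) : bword n :=
  rev (map (fun l : letter n => (l.1, ~~ l.2)) w).

Inductive beq (n : nat) : bword n -> bword n -> Prop :=
| beq_refl u : beq u u
| beq_sym u v : beq u v -> beq v u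
| beq_trans u v w : beq u v -> beq v w -> beq u w
| beq_cat u u' v v' : beq u u' -> beq v v' -> beq (u ++ v) (u' ++ v')
| beq_free (i : 'I_n.-1) (b : bool) : beq [:: (i, b); (i, ~~ b)] [::]
| beq_comm (i j : 'I_n.-1) : ((i : nat).+1 < j) || ((j : nat).+1 < i) ->
    beq [:: (i, true); (j, true)] [:: (j, true); (i, true)]
| beq_braid (i j : 'I_n.-1) : (j : nat) = i.+1 ->
    beq [:: (i, true); (j, true); (i, true)] [:: (j, true); (i, true); (j, true)].

Lemma lt_i_n n (i : 'I_n.-1) : (i : nat) < n.
Proof. have := ltn_ord i; lia. Qed.
Lemma lt_Si_n n (i : 'I_n.-1) : (i : nat).+1 < n.
Proof. have := ltn_ord i; lia. Qed.

(* pi(sigma_{i+1}) = transposition (i, i+1) (0-indexed positions in 'I_n) *)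
Definition sigma_perm n (i : 'I_n.-1) : 'S_n :=
  tperm (Ordinal (lt_i_n i)) (Ordinal (lt_Si_n i)).

Definition piw n (w : bword n) : 'S_n :=
  foldr (fun l p => (sigma_perm l.1 * p)%g) 1%g w.

Definition pure n (w : bword n) : Prop := piw w = 1%g.

Definition beq_closed n (S : bword n -> Prop) : Prop :=
  forall u v, beq u v -> S u -> S v.

Definition is_subgroup n (H : bword n -> Prop) : Prop :=
  [/\ beq_closed H, H [::],
      (forall u v, H u -> H v -> H (u ++ v)) &
      (forall u, H u -> H (winv u))].

Definition partially_biorderable n (H : bword n -> Prop) : Prop :=
  exists Q : bword n -> Prop,
    beq_closed Q /\ (forall u, Q u -> H u) /\ (exists u, Q u) /\
    (forall u v, Q u -> Q v -> Q (u ++ v)) /\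
    (forall u, Q u -> ~ Q (winv u)) /\
    (forall g u, H g -> Q u -> Q (g ++ u ++ winv g)).

(* The exponent sum, i.e. the abelianization B_n(D) -> Z, sigma_i |-> 1, is a
   conjugation-invariant homomorphism, so in any subgroup H the elements of
   positive exponent sum form a subsemigroup disjoint from its inverse and
   stable under conjugation by H.  It is nonempty as soon as H contains the
   pure braid sigma_1^2. *)
From mathcomp Require Import all_boot all_order all_algebra all_fingroup.
From mathcomp Require Import zify.
Set Implicit Arguments. Unset Strict Implicit. Unset Printing Implicit Defensive.

Import Order.TTheory GRing.Theory Num.Theory.

Section ExponentSum.
Local Open Scope ring_scope.
Variable n : nat.

Definition exponent_sum (w : bword n) : int :=
  (count (fun l : letter n => l.2) w)%:Z - (count (fun l : letter n => ~~ l.2) w)%:Z.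

Lemma exponent_sum_cat (u v : bword n) :
  exponent_sum (u ++ v) = exponent_sum u + exponent_sum v.
Proof. by rewrite /exponent_sum !count_cat !PoszD; lia. Qed.

Lemma exponent_sum_winv (u : bword n) : exponent_sum (winv u) = - exponent_sum u.
Proof.
rewrite /exponent_sum /winv !count_rev !count_map opprB.
by congr (_ - _); congr Posz; apply: eq_count => l /=; rewrite negbK.
Qed.

Lemma exponent_sum_beq (u v : bword n) : beq u v -> exponent_sum u = exponent_sum v.
Proof.
elim=> {u v} //=.
- by move=> u v w _ -> _ ->.
- by move=> u u' v v' _ eq_u _ eq_v; rewrite !exponent_sum_cat eq_u eq_v.
- by move=> i [].
Qed.

Lemma positive_exponent_sum_biorderable (H : bword n -> Prop) (w0 : bword n) :
  beq_closed H -> (forall u v, H u -> H v -> H (u ++ v)) ->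
  (forall u, H u -> H (winv u)) -> H w0 -> 0 < exponent_sum w0 ->
  partially_biorderable H.
Proof.
move=> closedH mulH invH Hw0 pos_w0.
exists (fun u => H u /\ 0 < exponent_sum u).
split; [|split; [|split; [|split; [|split]]]].
- move=> u v eq_uv [Hu pos_u]; split; first exact: closedH Hu.
  by rewrite -(exponent_sum_beq eq_uv).
- by move=> u [].
- by exists w0.
- move=> u v [Hu pos_u] [Hv pos_v]; split; first exact: mulH.
  by rewrite exponent_sum_cat addr_gt0.
- by move=> u [_ pos_u] [_]; rewrite exponent_sum_winv oppr_gt0 ltNge ltW.
- move=> g u Hg [Hu pos_u]; split; first by apply: mulH Hg (mulH _ _ Hu (invH _ Hg)).
  by rewrite !exponent_sum_cat exponent_sum_winv addrC subrK.
Qed.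

End ExponentSum.

Theorem mainTheorem4 (n : nat) : 2 <= n ->
  (forall H : bword n -> Prop,
      is_subgroup H ->
      (forall w, pure w -> H w) ->
      (exists w, H w /\ ~ pure w) ->
      partially_biorderable H)
  /\ partially_biorderable (fun _ : bword n => True).
Proof.
move=> n_ge2.
have lt0n : 0 < n.-1 by lia.
pose sigma1_sq : bword n := [:: (Ordinal lt0n, true); (Ordinal lt0n, true)].
have pos_sigma1_sq : (0 < exponent_sum sigma1_sq)%R by [].
have pure_sigma1_sq : pure sigma1_sq by rewrite /pure /piw /= mulg1 tperm2.
split.
- move=> H [closedH _ mulH invH] pureH _.
  exact: positive_exponent_sum_biorderable (pureH _ pure_sigma1_sq) pos_sigma1_sq.
- exact: (positive_exponent_sum_biorderable (w0 := sigma1_sq)).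
Qed.
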